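(* Let $q\ge 2$, $n\ge 1$, $h\in F(n,q)$ and $k=\kappa^{\min}(h)$. Then $$\mathcal{L}^*(h)=\mathcal{L}(h\,|\,n+k)=\Omega(h)+k .$$
   Context: Let $q\ge 2$, $A=\{0,1,\dots,q-1\}$, $[n]=\{1,\dots,n\}$, and let $F(n,q)$ be the set of all maps $A^n\to A^n$. For $f\in F(m,q)$ and $i\in[m]$, $f_i$ is the $i$-th coordinate function and $f^i(x)=(x_1,\dots,x_{i-1},f_i(x),x_{i+1},\dots,x_m)$; for a word $w=(w_1,\dots,w_t)$ over $[m]$, $f^w=f^{w_t}\circ\cdots\circ f^{w_1}$. $\Pi([m])$ is the set of permutations of $[m]$ written as words $(w_1,\dots,w_m)$. $\mathrm{pr}_{[n]}:A^m\to A^n$ is the projection onto the first $n$ coordinates. For $m\ge n$, $(f,w)$ with $f\in F(m,q)$, $w\in\Pi([m])$ sequentializes $h\in F(n,q)$ if $\mathrm{pr}_{[n]}\circ f^w=h\circ\mathrm{pr}_{[n]}$. $\kappa^{\min}(h)$ is the smallest $k\ge 0$ such that there exist $f\in F(n+k,q)$ and $w\in\Pi([n+k])$ with $(f,w)$ sequentializing $h$. A coordinate function $h_i$ is trivial if $h_i(x)=x_i$ for all $x$; $\Omega(h)$ is the number of $i\in[n]$ such that $h_i$ is not trivial. $F^*(m,q)$ is the set of $g\in F(m,q)$ that update at most one coordinate, i.e. there is $i\in[m]$ with $g_j(x)=x_j$ for all $j\ne i$ and all $x\in A^m$. For $m\ge n$, $\mathcal{L}(h\,|\,m)$ is the smallest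 $t\ge 0$ such that there exist $g^{(1)},\dots,g^{(t)}\in F^*(m,q)$ with $\mathrm{pr}_{[n]}\circ g^{(t)}\circ\cdots\circ g^{(1)}=h\circ\mathrm{pr}_{[n]}$, and $\mathcal{L}^*(h)=\min\{\mathcal{L}(h\,|\,m): m\ge n\}$. *)

From mathcomp Require Import all_boot.
Set Implicit Arguments. Unset Strict Implicit. Unset Printing Implicit Defensive.

(* A = {0,...,q-1} = 'I_q ; [n] = 'I_n (0-indexed); A^n = {ffun 'I_n -> 'I_q}. *)
Definition vec (n q : nat) := {ffun 'I_n -> 'I_q}.

Definition upd (m q : nat) (f : vec m q -> vec m q) (i : 'I_m) (x : vec m q) : vec m q :=
  [ffun j => if j == i then f x i else x j].

(* f^w = f^{w_t} o ... o f^{w_1}  (w_1 applied first) *)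
Definition upd_word (m q : nat) (f : vec m q -> vec m q) (w : seq 'I_m) (x : vec m q) : vec m q :=
  foldl (fun y i => upd f i y) x w.

Definition is_perm_word (m : nat) (w : seq 'I_m) : bool := perm_eq w (enum 'I_m).

Definition pr (n k q : nat) (x : vec (n + k) q) : vec n q :=
  [ffun i : 'I_n => x (lshift k i)].

Definition sequentializes (n k q : nat) (f : vec (n + k) q -> vec (n + k) q)
  (w : seq 'I_(n + k)) (h : vec n q -> vec n q) : Prop :=
  is_perm_word w /\ forall x, pr (upd_word f w x) = h (pr x).

Definition seqable (n q : nat) (h : vec n q -> vec n q) (k : nat) : Prop :=
  exists f w, @sequentializes n k q f w h.

Definition kappa_min_spec (n q : nat) (h : vec n q -> vec n q) (k : nat) : Prop :=
  seqable h k /\ forall k', seqable h k' -> k <= k'.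

Definition Omega (n q : nat) (h : vec n q -> vec n q) : nat :=
  #|[pred i : 'I_n | [exists x : vec n q, h x i != x i]]|.

Definition single_update (m q : nat) (g : vec m q -> vec m q) : Prop :=
  exists i : 'I_m, forall (j : 'I_m) (x : vec m q), j != i -> g x j = x j.

(* g^(t) o ... o g^(1), with gs = [:: g^(1); ...; g^(t)] *)
Definition comp_seq (m q : nat) (gs : seq (vec m q -> vec m q)) (x : vec m q) : vec m q :=
  foldl (fun y g => g y) x gs.

Definition computable_in (n q : nat) (h : vec n q -> vec n q) (k t : nat) : Prop :=
  exists gs : seq (vec (n + k) q -> vec (n + k) q),
    size gs = t /\ (forall i, i < size gs -> single_update (nth id gs i)) /\
    forall x, pr (comp_seq gs x) = h (pr x).

Definition L_spec (n q : nat) (h : vec n q -> vec n q) (k t : nat) : Prop :=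
  computable_in h k t /\ forall t', computable_in h k t' -> t <= t'.

(* t = L*(h) = min over m >= n (m = n + k) of L(h | m) *)
Definition Lstar_spec (n q : nat) (h : vec n q -> vec n q) (t : nat) : Prop :=
  (exists k, computable_in h k t) /\ forall k t', computable_in h k t' -> t <= t'.

From mathcomp Require Import all_boot zify.
Set Implicit Arguments. Unset Strict Implicit. Unset Printing Implicit Defensive.

(* Upper bound: in a sequentialization (f, w) of h with k extra coordinates,
   every coordinate is updated exactly once, so the update of a coordinate i
   with h_i trivial writes back the value it already holds and can be dropped;
   the remaining Omega(h) + k updates are single-coordinate maps computing h.

   Lower bound: conversely, let t single-coordinate updates compute h on n + k
   registers.  Give every step its own cell, except that the last write into a
   register holding a non-trivial output i goes to coordinate i itself; this
   needs only t - Omega(h) extra cells.  The update of the cell of step s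
   replays the program up to step s, reading each register off the cell of its
   last write (or off the input), and applies step s.  Updating the cells in
   program order, then the trivial coordinates (which are left unchanged),
   sequentializes h, so kappa_min(h) <= t - Omega(h). *)

Lemma count_enum (T : finType) (a : pred T) : count a (enum T) = #|a|.
Proof. by rewrite enumT cardE /enum_mem size_filter. Qed.

Section UpdWord.
Variables (m q : nat) (f : vec m q -> vec m q).

Lemma upd_word_cons i w x : upd_word f (i :: w) x = upd_word f w (upd f i x).
Proof. by []. Qed.

Lemma upd_word_cat w1 w2 x :
  upd_word f (w1 ++ w2) x = upd_word f w2 (upd_word f w1 x).
Proof. exact: foldl_cat. Qed.

Lemma upd_word_notin w x j : j \notin w -> upd_word f w x j = x j.
Proof.
elim: w x => [//|i w IHw] x; rewrite inE negb_or => /andP[ji jw].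
by rewrite upd_word_cons IHw // /upd ffunE (negbTE ji).
Qed.

Lemma upd_word_fixed w x : (forall j, j \in w -> upd f j x = x) -> upd_word f w x = x.
Proof.
elim: w => [//|i w IHw] fixed; rewrite upd_word_cons fixed ?mem_head //.
by apply: IHw => j jw; apply: fixed; rewrite inE jw orbT.
Qed.

Lemma upd_word_filter_noop (P : pred 'I_m) w x :
  (forall w1 j w2, w = w1 ++ j :: w2 -> P j ->
     upd f j (upd_word f w1 x) = upd_word f w1 x) ->
  upd_word f w x = upd_word f (filter (predC P) w) x.
Proof.
elim: w x => [//|j w IHw] x noop.
have noop' w1 j' w2 : w = w1 ++ j' :: w2 -> P j' ->
    upd f j' (upd_word f w1 (upd f j x)) = upd_word f w1 (upd f j x).
  by move=> ew; apply: (noop (j :: w1) j' w2); rewrite ew.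
rewrite upd_word_cons IHw //=; case: (boolP (P j)) => //= Pj.
by rewrite (noop [::] j w).
Qed.

Lemma comp_seq_map_upd w x : comp_seq (map (upd f) w) x = upd_word f w x.
Proof. by elim: w x => [//|j w IHw] x; exact: IHw. Qed.

Lemma single_update_upd i : single_update (upd f i).
Proof. by exists i => j x ji; rewrite /upd ffunE (negbTE ji). Qed.

Lemma single_update_nth_map_upd w s :
  s < size w -> single_update (nth id (map (upd f) w) s).
Proof. by elim: w s => [//|j w IHw] [_|s]; [exact: single_update_upd | exact: IHw]. Qed.

End UpdWord.

Definition trivial_coord n q (h : vec n q -> vec n q) (i : 'I_n) : bool :=
  [forall x, h x i == x i].

Lemma Omega_add_trivial n q (h : vec n q -> vec n q) : Omega h + #|trivial_coord h| = n.
Proof. by rewrite -[RHS](card_ord n) -(cardC (trivial_coord h)) addnC. Qed.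

Section SequentializationToSingleUpdates.
Variables (n k q : nat) (h : vec n q -> vec n q).
Variables (f : vec (n + k) q -> vec (n + k) q) (w : seq 'I_(n + k)).
Hypothesis fw_seq : sequentializes f w h.

Definition trivial_outputs : {set 'I_(n + k)} := [set lshift k i | i in trivial_coord h].

Lemma upd_trivial_output_noop w1 j w2 x : w = w1 ++ j :: w2 -> j \in trivial_outputs ->
  upd f j (upd_word f w1 x) = upd_word f w1 x.
Proof.
case: fw_seq => perm_w computes ew /imsetP[i triv_i ej]; subst j.
have [notin_w1 notin_w2] : lshift k i \notin w1 /\ lshift k i \notin w2.
  have := perm_uniq perm_w; rewrite enum_uniq ew cat_uniq /= negb_or.
  by case/and3P => _ /andP[-> _] /andP[-> _].
set y := upd_word f w1 x.
have y_i : y (lshift k i) = x (lshift k i) by rewrite upd_word_notin.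
have final_i : upd_word f w x (lshift k i) = f y (lshift k i).
  by rewrite ew upd_word_cat upd_word_cons upd_word_notin // /upd ffunE eqxx.
have f_y_i : f y (lshift k i) = y (lshift k i).
  have := congr1 (fun v : vec n q => v i) (computes x).
  by rewrite /pr ffunE final_i (eqP (forallP triv_i _)) ffunE y_i.
by apply/ffunP => l; rewrite /upd ffunE; case: eqP => [->|].
Qed.

Lemma size_filter_nontrivial_outputs :
  size (filter [predC trivial_outputs] w) = Omega h + k.
Proof.
case: fw_seq => perm_w _.
rewrite size_filter (permP perm_w) count_enum.
have card_triv : #|trivial_outputs| = #|trivial_coord h|.
  exact: (card_imset (mem (trivial_coord h)) (@lshift_inj n k)).
have := cardC trivial_outputs; have := Omega_add_trivial h; rewrite card_ord card_triv.
move=> omega_triv card_compl; apply: (@addnI #|trivial_coord h|); rewrite card_compl; lia.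
Qed.

Lemma computable_of_sequentializes : computable_in h k (Omega h + k).
Proof.
case: fw_seq => _ computes.
exists (map (upd f) (filter [predC trivial_outputs] w)); split; [|split].
- by rewrite size_map size_filter_nontrivial_outputs.
- by move=> s; rewrite size_map; exact: single_update_nth_map_upd.
- move=> x; rewrite comp_seq_map_upd -upd_word_filter_noop ?computes //.
  by move=> w1 j w2 ew; exact: upd_trivial_output_noop ew.
Qed.

End SequentializationToSingleUpdates.

Section SingleUpdatesToSequentialization.
Variables (n q k t : nat) (h : vec n q -> vec n q).
Hypotheses (q_gt0 : 0 < q) (n_gt0 : 0 < n).
Variable gs : seq (vec (n + k) q -> vec (n + k) q).
Hypothesis size_gs : size gs = t.
Hypothesis gs_single : forall s, s < size gs -> single_update (nth id gs s).
Hypothesis gs_computes : forall x, pr (comp_seq gs x) = h (pr x).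

Local Notation m := (n + k).
Local Notation step s := (nth id gs s).

Definition updates_only (g : vec m q -> vec m q) (j : 'I_m) : bool :=
  [forall x, forall l, (l != j) ==> (g x l == x l)].

Definition target s : 'I_m := odflt (lshift k (Ordinal n_gt0)) [pick j | updates_only (step s) j].

Lemma stepE s x : s < t ->
  step s x = [ffun l => if l == target s then step s x (target s) else x l].
Proof.
rewrite -size_gs => /gs_single[i only_i].
have : updates_only (step s) (target s).
  rewrite /target; case: pickP => [j //|none]; move: (none i) => /negbT/negP[].
  by apply/forallP => y; apply/forallP => l; apply/implyP => li; rewrite only_i.
move=> /forallP/(_ x)/forallP only_reg.
apply/ffunP => l; rewrite ffunE; case: eqP => [-> //|/eqP lr].
exact/eqP/(implyP (only_reg l)).
Qed.

Definition run p x := comp_seq (take p gs) x.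

Lemma run0 x : run 0 x = x.
Proof. by rewrite /run take0. Qed.

Lemma runS p x : p < t -> run p.+1 x = step p (run p x).
Proof. by move=> pt; rewrite /run (take_nth id) ?size_gs // /comp_seq foldl_rcons. Qed.

Lemma run_t x : run t x = comp_seq gs x.
Proof. by rewrite /run -size_gs take_size. Qed.

Lemma run_frame s p x j : s <= p <= t ->
  (forall s', s <= s' < p -> target s' != j) -> run p x j = run s x j.
Proof.
elim: p => [|p IHp]; first by rewrite leqn0 => /andP[/eqP -> _].
case/andP; rewrite leq_eqVlt => /orP[/eqP -> //|sp] pt unwritten.
have /negbTE j_target : j != target p.
  by rewrite eq_sym; apply: unwritten; rewrite ltnSn andbT -ltnS.
rewrite runS // (stepE _ pt) ffunE j_target IHp //.
- by rewrite -ltnS sp (ltnW pt).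
- by move=> s' /andP[ss' s'p]; apply: unwritten; rewrite ss' ltnW.
Qed.

Definition input_index (j : 'I_m) : option 'I_n :=
  if split j is inl i then Some i else None.

Lemma input_index_lshift i : input_index (lshift k i) = Some i.
Proof. by rewrite /input_index (unsplitK (inl _ i)). Qed.

Lemma input_indexK j i : input_index j = Some i -> j = lshift k i.
Proof. by rewrite /input_index; have := splitK j; case: (split j) => //= a <- [->]. Qed.

Definition extend (x : vec n q) : vec m q :=
  [ffun j => if input_index j is Some i then x i else Ordinal q_gt0].

Lemma pr_extend x : pr (extend x) = x.
Proof. by apply/ffunP => i; rewrite !ffunE input_index_lshift. Qed.

Lemma written_nontrivial i : ~~ trivial_coord h i -> exists s : 'I_t, target s == lshift k i.
Proof.
case/forallPn => x changed; apply/existsP; apply: contraR changed => unwritten.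
have := congr1 (fun v : vec n q => v i) (gs_computes (extend x)).
rewrite pr_extend -run_t /pr ffunE (@run_frame 0) ?run0 ?ffunE ?input_index_lshift.
- by move=> ->.
- by rewrite leqnn.
- move=> s /andP[_ st]; apply: contra unwritten => /eqP target_s.
  by apply/existsP; exists (Ordinal st); rewrite target_s.
Qed.

Definition final_write s := [forall s' : 'I_t, (s < s') ==> (target s' != target s)].

Lemma final_writeP s :
  reflect (forall s', s < s' < t -> target s' != target s) (final_write s).
Proof.
apply: (iffP forallP) => [later s' /andP[ss' s't] | later s'].
  by have /implyP := later (Ordinal s't); apply.
by apply/implyP => ss'; apply: later; rewrite ss' ltn_ord.
Qed.

Definition output s : option 'I_n :=
  if (s < t) && final_write s then
    if input_index (target s) is Some i then
      if trivial_coord h i then None else Some i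
    else None
  else None.

Lemma outputP s i : output s = Some i ->
  [/\ s < t, target s = lshift k i, ~~ trivial_coord h i & final_write s].
Proof.
rewrite /output; case: ifP => // /andP[st fin].
case E: (input_index (target s)) => [i'|] //; case: ifP => // nontriv [<-].
split=> //; [exact: (input_indexK E) | by rewrite nontriv].
Qed.

Lemma output_nontrivial i : ~~ trivial_coord h i -> exists s, output s = Some i.
Proof.
move=> nontriv; have [s0 written] := written_nontrivial nontriv.
case: (@arg_maxnP _ s0 (fun s => target s == lshift k i) val written) => s /eqP target_s latest.
exists s; rewrite /output ltn_ord target_s input_index_lshift (negbTE nontriv).
suff -> : final_write s by [].
apply/final_writeP => s' /andP[ss' s't]; rewrite target_s; apply/negP => rewritten.
by have := latest (Ordinal s't) rewritten; rewrite /= leqNgt ss'.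
Qed.

Definition rank s := count (fun s' => output s' == None) (iota 0 s).

Local Notation N := (rank t).

Lemma rank_lt s s' : s < s' -> output s = None -> rank s < rank s'.
Proof.
move=> ss' out_s; rewrite /rank -(subnKC (ltnW ss')) iotaD count_cat add0n.
have : 0 < s' - s by rewrite subn_gt0.
by case: (s' - s) => // r _ /=; rewrite out_s eqxx /= add1n addnS ltnS leq_addr.
Qed.

(* Non-output steps are numbered consecutively after the n output coordinates;
   the [insubd] default is only reached for [s >= t]. *)
Definition cell s : 'I_(n + N) :=
  if output s is Some i then lshift N i
  else insubd (lshift N (Ordinal n_gt0)) (n + rank s).

Lemma val_cell_fresh s : s < t -> output s = None -> val (cell s) = n + rank s.
Proof.
move=> st out_s; rewrite /cell out_s val_insubd ltn_add2l.
by rewrite (rank_lt st out_s).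
Qed.

Lemma cell_lshift s i : s < t -> cell s = lshift N i -> output s = Some i.
Proof.
move=> st; case out_s: (output s) => [i'|]; first by rewrite /cell out_s => /lshift_inj ->.
move/(congr1 val); rewrite val_cell_fresh //= => ei.
by have := ltn_ord i; rewrite -ei ltnNge leq_addr.
Qed.

Lemma cell_inj s s' : s < t -> s' < t -> cell s = cell s' -> s = s'.
Proof.
wlog ss' : s s' / s < s'.
  move=> gen st s't e; case: (ltngtP s s') => [lt|gt|//].
  - exact: gen.
  - exact/esym/gen.
move=> st s't e; case out_s: (output s) => [i|].
  have [_ target_s _ /final_writeP final] := outputP out_s.
  have cell_s : cell s = lshift N i by rewrite /cell out_s.
  have [_ target_s' _ _] := outputP (cell_lshift s't (etrans (esym e) cell_s)).
  by have := final s'; rewrite ss' s't target_s target_s' eqxx => /(_ isT).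
case out_s': (output s') => [i'|].
  have cell_s' : cell s' = lshift N i' by rewrite /cell out_s'.
  by have := cell_lshift st (etrans e cell_s'); rewrite out_s.
move/(congr1 val): e; rewrite !val_cell_fresh // => /addnI e.
by have := rank_lt ss' out_s; rewrite e ltnn.
Qed.

(* The registers of the program after p steps, as seen from the cells of y. *)
Fixpoint replay p (y : vec (n + N) q) : vec m q :=
  if p is p'.+1 then [ffun j => if j == target p' then y (cell p') else replay p' y j]
  else extend (pr y).

Definition step_of (e : 'I_(n + N)) : option nat := omap val [pick s : 'I_t | cell s == e].

Definition seq_map (y : vec (n + N) q) : vec (n + N) q :=
  [ffun e => if step_of e is Some s then step s (replay s y) (target s) else y e].

Definition seq_run p y := upd_word seq_map (map cell (iota 0 p)) y.

Lemma step_of_cell s : s < t -> step_of (cell s) = Some s.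
Proof.
move=> st; rewrite /step_of; case: pickP => [s' /eqP e | none] /=.
  by congr Some; apply: cell_inj => //; exact: ltn_ord.
by have := none (Ordinal st); rewrite eqxx.
Qed.

Lemma step_of_trivial i : trivial_coord h i -> step_of (lshift N i) = None.
Proof.
move=> triv; rewrite /step_of; case: pickP => [s /eqP e|] //=.
by have [_ _ nontriv _] := outputP (cell_lshift (ltn_ord s) e); rewrite triv in nontriv.
Qed.

Lemma seq_runS p y : seq_run p.+1 y = upd seq_map (cell p) (seq_run p y).
Proof. by rewrite /seq_run -addn1 iotaD map_cat upd_word_cat. Qed.

Lemma seq_run_frame s p y e : s <= p ->
  (forall s', s <= s' < p -> cell s' != e) -> seq_run p y e = seq_run s y e.
Proof.
elim: p => [|p IHp]; first by rewrite leqn0 => /eqP ->.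
rewrite leq_eqVlt => /orP[/eqP -> //|sp] untouched.
have /negbTE e_cell : e != cell p.
  by rewrite eq_sym; apply: untouched; rewrite ltnSn andbT -ltnS.
rewrite seq_runS /upd ffunE e_cell IHp //.
by move=> s' /andP[ss' s'p]; apply: untouched; rewrite ss' ltnW.
Qed.

Lemma replay_frame p (y y' : vec (n + N) q) j :
  (forall s, s < p -> y (cell s) = y' (cell s)) -> extend (pr y) j = extend (pr y') j ->
  replay p y j = replay p y' j.
Proof.
elim: p => [//|p IHp] same_cells same_input /=; rewrite !ffunE.
case: ifP => _; first exact: same_cells.
by apply: IHp => // s sp; apply: same_cells; exact: ltnW.
Qed.

Lemma replay_seq_run p y : p <= t -> replay p (seq_run p y) = run p (extend (pr y)).
Proof.
elim: p => [|p IHp] pt; first by rewrite run0.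
apply/ffunP => j; rewrite runS // (stepE _ pt) /= !ffunE.
case: eqP => [_|/eqP j_target].
  by rewrite seq_runS /upd ffunE eqxx /seq_map ffunE step_of_cell // IHp // (ltnW pt).
rewrite -IHp ?(ltnW pt) //; apply: replay_frame => [s sp|].
  rewrite seq_runS /upd ffunE; case: eqP => // /(cell_inj (ltn_trans sp pt) pt) ps.
  by rewrite ps ltnn in sp.
rewrite /extend !ffunE; case input_j: (input_index j) => [i|] //.
rewrite seq_runS /pr /upd !ffunE; case: eqP => // /esym /(cell_lshift pt) out_p.
have [_ target_p _ _] := outputP out_p.
by move: j_target; rewrite target_p (input_indexK input_j) eqxx.
Qed.

Lemma pr_seq_run_t y : pr (seq_run t y) = h (pr y).
Proof.
have computes := gs_computes (extend (pr y)); rewrite pr_extend -run_t in computes.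
apply/ffunP => i; rewrite ffunE.
have [triv|nontriv] := boolP (trivial_coord h i).
  rewrite (@seq_run_frame 0) ?(eqP (forallP triv _)) ?ffunE //.
  move=> s /andP[_ st]; apply/negP => /eqP /(cell_lshift st) out_s.
  by have [_ _ nontriv _] := outputP out_s; rewrite triv in nontriv.
have [s out_s] := output_nontrivial nontriv.
have [st target_s _ /final_writeP final] := outputP out_s.
have -> : lshift N i = cell s by rewrite /cell out_s.
rewrite (@seq_run_frame s.+1) //.
- have -> : seq_run s.+1 y (cell s) = replay s.+1 (seq_run s.+1 y) (target s).
    by rewrite /= ffunE eqxx.
  rewrite replay_seq_run // -(@run_frame s.+1 t _ (target s)).
  + by rewrite -computes ffunE target_s.
  + by rewrite st leqnn.
  + by move=> s' /andP[ss' s't]; apply: final; rewrite ss' s't.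
- move=> s' /andP[ss' s't]; apply/negP => /eqP /(cell_inj s't st) e.
  by rewrite e ltnn in ss'.
Qed.

Lemma Omega_add_rank_le : Omega h + N <= t.
Proof.
have := count_predC (fun s => output s == None) (iota 0 t); rewrite size_iota -/(rank t).
suff : Omega h <= count (predC (fun s => output s == None)) (iota 0 t) by lia.
rewrite -size_filter -(size_map output) /Omega cardE -(size_map Some).
apply: uniq_leq_size; first by rewrite (map_inj_uniq Some_inj) enum_uniq.
move=> ? /mapP[i]; rewrite mem_enum => /existsP[x changed] ->.
have nontriv : ~~ trivial_coord h i by apply/forallPn; exists x.
have [s out_s] := output_nontrivial nontriv; have [st _ _ _] := outputP out_s.
apply/mapP; exists s; last by rewrite out_s.
by rewrite mem_filter /= out_s mem_iota add0n st.
Qed.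

Definition seq_word := map cell (iota 0 t) ++ map (lshift N) (enum (trivial_coord h)).

Lemma seq_word_perm : is_perm_word seq_word.
Proof.
have uniq_word : uniq seq_word.
  rewrite cat_uniq; apply/and3P; split.
  - rewrite map_inj_in_uniq ?iota_uniq // => s s'.
    by rewrite !mem_iota !add0n => /andP[_ st] /andP[_ s't]; exact: cell_inj.
  - apply/hasPn => ? /mapP[i]; rewrite mem_enum => triv ->.
    apply/mapP => -[s]; rewrite mem_iota add0n => /andP[_ st] /esym /(cell_lshift st) out_s.
    by have [_ _ /negP nontriv _] := outputP out_s; apply: nontriv.
  - by rewrite (map_inj_uniq (@lshift_inj _ _)) enum_uniq.
have size_word : size (enum 'I_(n + N)) <= size seq_word.
  rewrite size_enum_ord size_cat !size_map size_iota -cardE.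
  apply: (@leq_trans (Omega h + #|trivial_coord h| + N)); first by rewrite Omega_add_trivial.
  by rewrite addnAC leq_add2r Omega_add_rank_le.
have [_ eq_word] := uniq_min_size uniq_word (fun e _ => mem_enum _ e) size_word.
exact: uniq_perm uniq_word (enum_uniq _) eq_word.
Qed.

Lemma seqable_of_computable : exists N', seqable h N' /\ Omega h + N' <= t.
Proof.
exists N; split; last exact: Omega_add_rank_le.
exists seq_map, seq_word; split; first exact: seq_word_perm.
move=> y; rewrite upd_word_cat -/(seq_run t y) upd_word_fixed ?pr_seq_run_t //.
move=> ? /mapP[i]; rewrite mem_enum => triv ->.
apply/ffunP => e; rewrite /upd ffunE; case: eqP => // ->.
by rewrite /seq_map ffunE step_of_trivial.
Qed.

End SingleUpdatesToSequentialization.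

Lemma computable_of_seqable n k q (h : vec n q -> vec n q) :
  seqable h k -> computable_in h k (Omega h + k).
Proof. by case=> f [w fw]; exact: computable_of_sequentializes fw. Qed.

Lemma Omega_add_kappa_min_le n q (h : vec n q -> vec n q) k k' t :
  0 < q -> 0 < n -> kappa_min_spec h k -> computable_in h k' t -> Omega h + k <= t.
Proof.
move=> q_gt0 n_gt0 [_ k_min] [gs [size_gs [gs_single gs_computes]]].
have [N [seq_N le_t]] := seqable_of_computable q_gt0 n_gt0 size_gs gs_single gs_computes.
by apply: leq_trans le_t; rewrite leq_add2l k_min.
Qed.

Theorem mainTheorem7 (q n : nat) (hq : 2 <= q) (hn : 1 <= n)
  (h : vec n q -> vec n q) (k : nat) (hk : kappa_min_spec h k) :
  Lstar_spec h (Omega h + k) /\ L_spec h k (Omega h + k).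
Proof.
have lower := Omega_add_kappa_min_le (ltnW hq) hn hk.
have upper := computable_of_seqable hk.1.
by split; split=> [|t]; [exists k | exact: lower | | exact: lower].
Qed.
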